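(* Every semi-arc visibility graph is planar.
   Context: An arc visibility representation is a finite collection of pairwise disjoint circular arcs, all concentric (centered at a common point $O$). A line of sight is a radial line segment, i.e. a segment contained in a line through $O$ (it may pass through $O$). The arc visibility graph has one vertex per arc, with two vertices adjacent when the two corresponding arcs are joined by a line of sight (having its endpoints on the two arcs) that intersects no other arc. A semi-arc visibility representation is an arc visibility representation in which every arc starts on one common radial ray from $O$ and extends counterclockwise from it; the corresponding graph is a semi-arc visibility graph. *)

From Stdlib Require Import Reals.
Open Scope R_scope.

Definition semi_arc (r th : R) (p : R * R) : Prop :=
  exists t, 0 <= t <= th /\ p = (r * cos t, r * sin t).

Definition semi_arc_rep (n : nat) (r th : nat -> R) : Prop :=
  (forall i, (i < n)%nat -> 0 < r i /\ 0 < th i < 2 * PI) /\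
  (forall i j, (i < n)%nat -> (j < n)%nat -> i <> j ->
     forall p, semi_arc (r i) (th i) p -> ~ semi_arc (r j) (th j) p).

Definition segment (p q x : R * R) : Prop :=
  exists s, 0 <= s <= 1 /\
    x = (fst p + s * (fst q - fst p), snd p + s * (snd q - snd p)).

Definition radial (p q : R * R) : Prop :=
  fst p * snd q - snd p * fst q = 0.

Definition sav_adj (n : nat) (r th : nat -> R) (i j : nat) : Prop :=
  i <> j /\
  exists p q, semi_arc (r i) (th i) p /\ semi_arc (r j) (th j) q /\
    radial p q /\
    forall k, (k < n)%nat -> k <> i -> k <> j ->
      forall x, segment p q x -> ~ semi_arc (r k) (th k) x.

Definition planar (n : nat) (adj : nat -> nat -> Prop) : Prop :=
  exists (pos : nat -> R * R) (gam : nat -> nat -> R -> R * R),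
    (forall i j, (i < n)%nat -> (j < n)%nat -> pos i = pos j -> i = j) /\
    (forall i j, (i < j)%nat -> (j < n)%nat -> adj i j ->
       continuity (fun t => fst (gam i j t)) /\
       continuity (fun t => snd (gam i j t)) /\
       gam i j 0 = pos i /\ gam i j 1 = pos j /\
       (forall s t, 0 <= s <= 1 -> 0 <= t <= 1 -> gam i j s = gam i j t -> s = t) /\
       (forall k t, (k < n)%nat -> 0 < t < 1 -> gam i j t <> pos k) /\
       (forall k l, (k < l)%nat -> (l < n)%nat -> adj k l -> (i, j) <> (k, l) ->
          forall s t, 0 < s < 1 -> 0 < t < 1 -> gam i j s <> gam k l t)).

(* Draw arc k as the point (r k, th k) of the (radius, end angle) plane.  A line
   of sight lies on a line through O.  Unless it passes through O with the inner
   arc stopping short of the opposite ray, every arc of intermediate radius ends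
   before both of its arcs (clear_between); such edges are straight segments,
   and two of them cannot cross because each passes above every vertex strictly
   between its ends.  The remaining edges pass through O (crossing): both of
   their arcs reach past every arc of smaller radius, so no segment passes over
   their endpoints, and crossings are ordered consistently in both radii.  They
   are drawn as detours leaving the picture downwards, going around its right
   side and coming back from above, nested according to the sum of the radii. *)

From Stdlib Require Import Reals Lra Lia ClassicalEpsilon.
Open Scope R_scope.

(** * Polylines *)

Definition clamp01 (z : R) : R := (Rabs z - Rabs (z - 1) + 1) / 2.

Lemma clamp01_le0 z : z <= 0 -> clamp01 z = 0.
Proof. intro; unfold clamp01; rewrite (Rabs_left1 z), (Rabs_left1 (z - 1)); lra. Qed.

Lemma clamp01_ge1 z : 1 <= z -> clamp01 z = 1.
Proof. intro; unfold clamp01; rewrite (Rabs_right z), (Rabs_right (z - 1)); lra. Qed.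

Lemma clamp01_id z : 0 <= z <= 1 -> clamp01 z = z.
Proof. intro; unfold clamp01; rewrite (Rabs_right z), (Rabs_left1 (z - 1)); lra. Qed.

Lemma continuity_cst (c : R) : continuity (fun _ => c).
Proof. apply continuity_const; intros ? ?; reflexivity. Qed.

Lemma continuity_affine (a b : R) : continuity (fun t => a + t * b).
Proof.
  apply continuity_plus; [apply continuity_cst|].
  apply continuity_mult; [apply derivable_continuous, derivable_id|apply continuity_cst].
Qed.

Lemma continuity_clamp01 : continuity clamp01.
Proof.
  unfold clamp01, Rdiv. intro z.
  apply continuity_mult; [|apply continuity_cst].
  apply continuity_plus; [|apply continuity_cst].
  apply continuity_minus; [apply Rcontinuity_abs|].
  apply (continuity_comp (fun z => z - 1) Rabs); [|apply Rcontinuity_abs].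
  apply continuity_minus; [apply derivable_continuous, derivable_id|apply continuity_cst].
Qed.

Definition lerp (p q : R * R) (l : R) : R * R :=
  (fst p + l * (fst q - fst p), snd p + l * (snd q - snd p)).

Definition polyline5_coord (a0 a1 a2 a3 a4 a5 t : R) : R :=
  a0 + (a1 - a0) * clamp01 (5 * t) + (a2 - a1) * clamp01 (5 * t - 1)
     + (a3 - a2) * clamp01 (5 * t - 2) + (a4 - a3) * clamp01 (5 * t - 3)
     + (a5 - a4) * clamp01 (5 * t - 4).

Definition polyline5 (p0 p1 p2 p3 p4 p5 : R * R) (t : R) : R * R :=
  (polyline5_coord (fst p0) (fst p1) (fst p2) (fst p3) (fst p4) (fst p5) t,
   polyline5_coord (snd p0) (snd p1) (snd p2) (snd p3) (snd p4) (snd p5) t).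

Lemma continuity_polyline5_coord a0 a1 a2 a3 a4 a5 :
  continuity (polyline5_coord a0 a1 a2 a3 a4 a5).
Proof.
  assert (Hleg : forall c f, continuity f -> continuity (fun t => c * clamp01 (f t))).
  { intros c f Hf. apply continuity_mult; [apply continuity_cst|].
    exact (continuity_comp f clamp01 Hf continuity_clamp01). }
  assert (H5 : continuity (fun t => 5 * t)).
  { apply continuity_mult; [apply continuity_cst|apply derivable_continuous, derivable_id]. }
  unfold polyline5_coord.
  repeat apply continuity_plus; try apply continuity_cst;
    apply Hleg; try exact H5; apply continuity_minus; auto using continuity_cst.
Qed.

Ltac simpl_clamps :=
  repeat first [ rewrite clamp01_le0 by lra | rewrite clamp01_ge1 by lra
               | rewrite clamp01_id by lra ].

Lemma polyline5_0 p0 p1 p2 p3 p4 p5 : polyline5 p0 p1 p2 p3 p4 p5 0 = p0.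
Proof. unfold polyline5, polyline5_coord; simpl_clamps; destruct p0; f_equal; simpl; ring. Qed.

Lemma polyline5_1 p0 p1 p2 p3 p4 p5 : polyline5 p0 p1 p2 p3 p4 p5 1 = p5.
Proof. unfold polyline5, polyline5_coord; simpl_clamps; destruct p5; f_equal; simpl; ring. Qed.

Lemma polyline5_legs p0 p1 p2 p3 p4 p5 t : 0 <= t <= 1 ->
  exists l, 0 <= l <= 1 /\
  ((t = l / 5 /\ polyline5 p0 p1 p2 p3 p4 p5 t = lerp p0 p1 l) \/
   (t = (1 + l) / 5 /\ polyline5 p0 p1 p2 p3 p4 p5 t = lerp p1 p2 l) \/
   (t = (2 + l) / 5 /\ polyline5 p0 p1 p2 p3 p4 p5 t = lerp p2 p3 l) \/
   (t = (3 + l) / 5 /\ polyline5 p0 p1 p2 p3 p4 p5 t = lerp p3 p4 l) \/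
   (t = (4 + l) / 5 /\ polyline5 p0 p1 p2 p3 p4 p5 t = lerp p4 p5 l)).
Proof.
  intro Ht. unfold polyline5, polyline5_coord, lerp.
  destruct (Rle_lt_dec t (1/5)); [exists (5 * t); split; [lra|]; left|].
  2: destruct (Rle_lt_dec t (2/5)); [exists (5 * t - 1); split; [lra|]; right; left|].
  3: destruct (Rle_lt_dec t (3/5)); [exists (5 * t - 2); split; [lra|]; right; right; left|].
  4: destruct (Rle_lt_dec t (4/5)); [exists (5 * t - 3); split; [lra|]; right; right; right; left|].
  5: exists (5 * t - 4); split; [lra|]; right; right; right; right.
  all: split; [lra|]; simpl_clamps; f_equal; ring.
Qed.

(** * Detours *)

(* The first and last legs are slanted by [e], so that detours with a common
   endpoint and different [e] leave it in different directions. *)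
Definition detour (ux ax uy ay e s B T : R) : R -> R * R :=
  polyline5 (ux, ax) (ux + e, - s) (B + s, - s) (B + s, T + s) (uy + e, T + s) (uy, ay).

Definition detour_params (ux ax uy ay e s B T : R) : Prop :=
  0 < e /\ e < 1 /\ ux + e < uy /\ uy < B /\ 1 <= s /\ 0 < ax /\ ax < ay /\ ay < T.

Definition steep_leg (u a e h : R) (z : R * R) : Prop :=
  exists l, 0 < l <= 1 /\ z = (u + l * e, a + l * (h - a)).

Definition detour_locus (ux ax uy ay e s B T : R) (z : R * R) : Prop :=
  steep_leg ux ax e (- s) z \/
  (snd z = - s /\ ux + e <= fst z <= B + s) \/
  (fst z = B + s /\ - s <= snd z <= T + s) \/
  (snd z = T + s /\ uy + e <= fst z <= B + s) \/
  steep_leg uy ay e (T + s) z.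

Lemma detour_0 ux ax uy ay e s B T : detour ux ax uy ay e s B T 0 = (ux, ax).
Proof. apply polyline5_0. Qed.

Lemma detour_1 ux ax uy ay e s B T : detour ux ax uy ay e s B T 1 = (uy, ay).
Proof. apply polyline5_1. Qed.

Lemma continuity_detour ux ax uy ay e s B T :
  continuity (fun t => fst (detour ux ax uy ay e s B T t)) /\
  continuity (fun t => snd (detour ux ax uy ay e s B T t)).
Proof. split; apply continuity_polyline5_coord. Qed.

Lemma detour_interior ux ax uy ay e s B T t :
  detour_params ux ax uy ay e s B T -> 0 < t < 1 ->
  detour_locus ux ax uy ay e s B T (detour ux ax uy ay e s B T t).
Proof.
  intros (He & He1 & Hxy & HyB & Hs & Hax & Haxy & HaT) Ht. unfold detour, detour_locus.
  destruct (polyline5_legs (ux, ax) (ux + e, - s) (B + s, - s) (B + s, T + s)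
                           (uy + e, T + s) (uy, ay) t ltac:(lra))
    as (l & Hl & [[E ->]|[[E ->]|[[E ->]|[[E ->]|[E ->]]]]]); unfold lerp; simpl.
  - left. exists l. split; [lra|]. f_equal; ring.
  - right; left. split; [ring|nra].
  - right; right; left. split; [ring|nra].
  - right; right; right; left. split; [ring|nra].
  - right; right; right; right. exists (1 - l). split; [lra|]. f_equal; ring.
Qed.

Lemma detour_injective ux ax uy ay e s B T t1 t2 :
  detour_params ux ax uy ay e s B T -> 0 <= t1 <= 1 -> 0 <= t2 <= 1 ->
  detour ux ax uy ay e s B T t1 = detour ux ax uy ay e s B T t2 -> t1 = t2.
Proof.
  intros (He & He1 & Hxy & HyB & Hs & Hax & Haxy & HaT) H1 H2. unfold detour.
  destruct (polyline5_legs (ux, ax) (ux + e, - s) (B + s, - s) (B + s, T + s)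
                           (uy + e, T + s) (uy, ay) t1 H1)
    as (l & Hl & [[E ->]|[[E ->]|[[E ->]|[[E ->]|[E ->]]]]]);
  destruct (polyline5_legs (ux, ax) (ux + e, - s) (B + s, - s) (B + s, T + s)
                           (uy + e, T + s) (uy, ay) t2 H2)
    as (m & Hm & [[E' ->]|[[E' ->]|[[E' ->]|[[E' ->]|[E' ->]]]]]);
  unfold lerp; simpl; intro Q; injection Q; clear Q; intros Q2 Q1; subst t1 t2; nra.
Qed.

Lemma steeper_ray_no_meet l m e du c d :
  0 < l -> 0 < m -> 0 < e < du -> m * du = l * e -> m * d = l * c ->
  (c < 0 /\ c < d) \/ (0 < c /\ d < c) -> False.
Proof.
  intros Hl Hm He Hu Hd Hc.
  assert (m < l) by nra.
  destruct Hc as [[? ?]|[? ?]]; nra.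
Qed.

Lemma steep_leg_strip u a e h z : 0 < e -> steep_leg u a e h z -> u < fst z <= u + e.
Proof. intros He (l & Hl & ->); simpl; nra. Qed.

Lemma steep_leg_below u a e h z : h < a -> steep_leg u a e h z -> h <= snd z < a.
Proof. intros Hh (l & Hl & ->); simpl; nra. Qed.

Lemma steep_leg_above u a e h z : a < h -> steep_leg u a e h z -> a < snd z <= h.
Proof. intros Hh (l & Hl & ->); simpl; nra. Qed.

Lemma steep_legs_disjoint u a e h f h' z :
  0 < e < f -> (h < h' < a \/ a < h' < h) ->
  steep_leg u a e h z -> steep_leg u a f h' z -> False.
Proof.
  intros Hef Hh (l & Hl & ->) (m & Hm & E). injection E; intros Ea Eu.
  apply (steeper_ray_no_meet l m e f (h - a) (h' - a)); lra.
Qed.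

(** * Segments *)

Definition open_seg (u1 a1 u2 a2 : R) (z : R * R) : Prop :=
  exists m, 0 < m < 1 /\ z = (u1 + m * (u2 - u1), a1 + m * (a2 - a1)).

Lemma open_seg_strip u1 a1 u2 a2 z : u1 < u2 -> open_seg u1 a1 u2 a2 z -> u1 < fst z < u2.
Proof. intros H (m & Hm & ->); simpl; nra. Qed.

Lemma open_seg_height u1 a1 u2 a2 z :
  open_seg u1 a1 u2 a2 z -> Rmin a1 a2 <= snd z <= Rmax a1 a2.
Proof.
  intros (m & Hm & ->); simpl.
  unfold Rmin, Rmax; destruct (Rle_dec a1 a2); nra.
Qed.

Lemma open_seg_steep_leg_disjoint u a u2 a2 e h z :
  0 < e < u2 - u -> (h < a /\ h < a2) \/ (a < h /\ a2 < h) ->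
  open_seg u a u2 a2 z -> steep_leg u a e h z -> False.
Proof.
  intros He Hh (m & Hm & ->) (l & Hl & E). injection E; intros Ea Eu.
  apply (steeper_ray_no_meet l m e (u2 - u) (h - a) (a2 - a)); lra.
Qed.

(** * Disjointness *)

Ltac steep_leg_bounds :=
  repeat match goal with
  | H : steep_leg ?u ?a ?e ?h ?z |- _ =>
      pose proof (steep_leg_strip u a e h z ltac:(lra) H);
      first [ pose proof (steep_leg_below u a e h z ltac:(lra) H)
            | pose proof (steep_leg_above u a e h z ltac:(lra) H) ];
      revert H
  end; intros.

Definition apart (g u a u' a' : R) : Prop :=
  (u = u' /\ a = a') \/ u + g <= u' \/ u' + g <= u.

Lemma detours_disjoint ux ax uy ay e s vx bx vy by' f s' B T g z :
  detour_params ux ax uy ay e s B T -> detour_params vx bx vy by' f s' B T ->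
  s' < s -> e < f -> f < g -> ux <= vx -> uy <= vy ->
  apart g ux ax vx bx -> apart g uy ay vy by' -> apart g uy ay vx bx ->
  detour_locus ux ax uy ay e s B T z -> detour_locus vx bx vy by' f s' B T z -> False.
Proof.
  intros (He & He1 & Hxy & HyB & Hs & Hax & Haxy & HaT)
         (Hf & Hf1 & Hvxy & HvyB & Hs' & Hbx & Hbxy & HbT) Hss Hef Hfg Hx Hy A1 A2 A3.
  intros [Z|[Z|[Z|[Z|Z]]]] [Z'|[Z'|[Z'|[Z'|Z']]]]; steep_leg_bounds;
  destruct A1 as [[E1 E1']|A1]; destruct A2 as [[E2 E2']|A2];
  destruct A3 as [[E3 E3']|A3]; try lra.
  all: first
    [ subst vx bx; apply (steep_legs_disjoint ux ax e (- s) f (- s') z); auto; lra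
    | subst vy by'; apply (steep_legs_disjoint uy ay e (T + s) f (T + s') z); auto; lra ].
Qed.

Lemma open_seg_detour_disjoint uk ak um am ux ax uy ay e s B T g z :
  uk < um -> 0 < ak < T -> 0 < am < T -> um < B ->
  detour_params ux ax uy ay e s B T -> e < g ->
  apart g uk ak ux ax -> apart g um am ux ax -> apart g uk ak uy ay -> apart g um am uy ay ->
  ~ (uk < ux < um) -> ~ (uk < uy < um) ->
  open_seg uk ak um am z -> detour_locus ux ax uy ay e s B T z -> False.
Proof.
  intros Hkm Hk Hm HmB (He & He1 & Hxy & HyB & Hs & Hax & Haxy & HaT) Heg A1 A2 A3 A4 N1 N2 S.
  pose proof (open_seg_strip uk ak um am z Hkm S).
  assert (0 < snd z < T).
  { pose proof (open_seg_height uk ak um am z S).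
    pose proof (Rmin_glb_lt ak am 0 (proj1 Hk) (proj1 Hm)).
    pose proof (Rmax_lub_lt ak am T (proj2 Hk) (proj2 Hm)). lra. }
  intros [Z|[Z|[Z|[Z|Z]]]]; steep_leg_bounds; try lra;
  destruct A1 as [[E1 E1']|[A1|A1]]; destruct A2 as [[E2 E2']|[A2|A2]];
  destruct A3 as [[E3 E3']|[A3|A3]]; destruct A4 as [[E4 E4']|[A4|A4]]; try lra.
  all: first
    [ subst uk ak; apply (open_seg_steep_leg_disjoint ux ax um am e (- s) z); auto; lra
    | subst uk ak; apply (open_seg_steep_leg_disjoint uy ay um am e (T + s) z); auto; lra ].
Qed.

Lemma detour_avoids_point ux ax uy ay e s B T g uk ak :
  detour_params ux ax uy ay e s B T -> e < g -> 0 < ak < T -> uk < B ->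
  apart g uk ak ux ax -> apart g uk ak uy ay ->
  ~ detour_locus ux ax uy ay e s B T (uk, ak).
Proof.
  intros (He & He1 & Hxy & HyB & Hs & Hax & Haxy & HaT) Heg Hk HkB A1 A2.
  intros [Z|[Z|[Z|[Z|Z]]]]; steep_leg_bounds; simpl in *;
  destruct A1 as [[? ?]|[?|?]]; destruct A2 as [[? ?]|[?|?]]; lra.
Qed.

Lemma open_seg_avoids_point u1 a1 u2 a2 uk ak :
  u1 < u2 -> (uk = u1 -> ak = a1) -> (uk = u2 -> ak = a2) ->
  (u1 < uk < u2 -> ak < a1 /\ ak < a2) ->
  ~ open_seg u1 a1 u2 a2 (uk, ak).
Proof.
  intros H12 E1 E2 V (m & Hm & E). injection E; intros Ea Eu.
  destruct (Req_dec uk u1) as [->|]; [nra|].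
  destruct (Req_dec uk u2) as [->|]; [nra|].
  destruct (V ltac:(nra)). nra.
Qed.

Definition depth_below (u1 a1 u2 a2 u a : R) : R :=
  (u - u1) * (a2 - a1) - (a - a1) * (u2 - u1).

Lemma depth_below_pos u1 a1 u2 a2 u a :
  u1 < u < u2 -> a < a1 -> a < a2 -> 0 < depth_below u1 a1 u2 a2 u a.
Proof. unfold depth_below; intros; nra. Qed.

Lemma nested_open_segs_disjoint u1 a1 u2 a2 u3 a3 u4 a4 z :
  u1 <= u3 -> u3 < u4 -> u4 <= u2 ->
  ((u3 = u1 /\ a3 = a1) \/ (u1 < u3 /\ a3 < a1 /\ a3 < a2)) ->
  ((u4 = u2 /\ a4 = a2) \/ (u4 < u2 /\ a4 < a1 /\ a4 < a2)) ->
  ~ (u3 = u1 /\ u4 = u2) ->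
  open_seg u1 a1 u2 a2 z -> ~ open_seg u3 a3 u4 a4 z.
Proof.
  intros H13 H34 H42 C3 C4 Hn (m & Hm & ->) (k & Hk & E). injection E; intros Ea Eu.
  set (d := depth_below u1 a1 u2 a2).
  assert (Dz : d (u1 + m * (u2 - u1)) (a1 + m * (a2 - a1)) = 0)
    by (unfold d, depth_below; ring).
  assert (Dlerp : d (u3 + k * (u4 - u3)) (a3 + k * (a4 - a3))
                  = (1 - k) * d u3 a3 + k * d u4 a4) by (unfold d, depth_below; ring).
  assert (D3 : 0 <= d u3 a3).
  { destruct C3 as [[-> ->]|(? & ? & ?)]; [unfold d, depth_below; lra|].
    apply Rlt_le, depth_below_pos; lra. }
  assert (D4 : 0 <= d u4 a4).
  { destruct C4 as [[-> ->]|(? & ? & ?)]; [unfold d, depth_below; lra|].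
    apply Rlt_le, depth_below_pos; lra. }
  assert (D34 : 0 < d u3 a3 \/ 0 < d u4 a4).
  { destruct C3 as [[? ?]|(? & ? & ?)]; [destruct C4 as [[? ?]|(? & ? & ?)]; [tauto|]|];
      [right|left]; apply depth_below_pos; lra. }
  rewrite <- Ea, <- Eu, Dz in Dlerp. destruct D34; nra.
Qed.

Lemma open_segs_disjoint u1 a1 u2 a2 u3 a3 u4 a4 z :
  u1 < u2 -> u3 < u4 ->
  (u1 = u3 -> a1 = a3) -> (u2 = u4 -> a2 = a4) ->
  (u1 < u3 < u2 -> a3 < a1 /\ a3 < a2) -> (u1 < u4 < u2 -> a4 < a1 /\ a4 < a2) ->
  (u3 < u1 < u4 -> a1 < a3 /\ a1 < a4) -> (u3 < u2 < u4 -> a2 < a3 /\ a2 < a4) ->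
  ~ (u1 = u3 /\ u2 = u4) ->
  open_seg u1 a1 u2 a2 z -> ~ open_seg u3 a3 u4 a4 z.
Proof.
  intros H12 H34 E13 E24 V3 V4 V1 V2 Hn Z1 Z2.
  pose proof (open_seg_strip u1 a1 u2 a2 z H12 Z1).
  pose proof (open_seg_strip u3 a3 u4 a4 z H34 Z2).
  destruct (Rle_lt_dec u1 u3); [destruct (Rle_lt_dec u4 u2)|destruct (Rle_lt_dec u2 u4)].
  - apply (nested_open_segs_disjoint u1 a1 u2 a2 u3 a3 u4 a4 z); auto; lra.
  - destruct (Req_dec u1 u3) as [<-|]; [|lra].
    apply (nested_open_segs_disjoint u1 a3 u4 a4 u1 a1 u2 a2 z); auto; lra.
  - apply (nested_open_segs_disjoint u3 a3 u4 a4 u1 a1 u2 a2 z); auto; lra.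
  - lra.
Qed.

(** * Lines of sight *)

Lemma sin_eq_0_small d : sin d = 0 -> - (2 * PI) < d < 2 * PI -> d = 0 \/ d = PI \/ d = - PI.
Proof.
  intros H Hd. destruct (sin_eq_0_0 d H) as [k ->].
  pose proof PI_RGT_0.
  assert (Hk : (-2 < k < 2)%Z) by (split; apply lt_IZR; simpl; nra).
  assert (Hk' : (k = 0 \/ k = 1 \/ k = -1)%Z) by lia.
  destruct Hk' as [-> | [-> | ->]]; simpl; lra.
Qed.

Lemma semi_arc_at r0 th0 t : 0 <= t <= th0 -> semi_arc r0 th0 (r0 * cos t, r0 * sin t).
Proof. intro; exists t; auto. Qed.

Lemma segment_sym p q x : segment p q x -> segment q p x.
Proof. intros (s & Hs & ->). exists (1 - s). split; [lra|]. f_equal; ring. Qed.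

Lemma segment_on_line c s rho1 rho2 rho :
  rho1 <> rho2 -> (rho1 <= rho <= rho2 \/ rho2 <= rho <= rho1) ->
  segment (rho1 * c, rho1 * s) (rho2 * c, rho2 * s) (rho * c, rho * s).
Proof.
  intros Hne Hb. exists ((rho - rho1) / (rho2 - rho1)).
  assert (E : (rho - rho1) / (rho2 - rho1) * (rho2 - rho1) = rho - rho1) by (field; lra).
  split; [destruct Hb; split; nra|]. simpl. f_equal; field; lra.
Qed.

Lemma polar_add_PI rho t :
  (rho * cos (t + PI), rho * sin (t + PI)) = (- rho * cos t, - rho * sin t).
Proof. rewrite neg_cos, neg_sin. f_equal; ring. Qed.

Definition clear_between (n : nat) (r th : nat -> R) (i j : nat) : Prop :=
  forall k, (k < n)%nat -> (r i < r k < r j \/ r j < r k < r i) -> th k < th i /\ th k < th j.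

Definition through_center_view (n : nat) (r th : nat -> R) (x y : nat) (t : R) : Prop :=
  0 <= t <= th x /\ th x < t + PI <= th y /\
  forall k, (k < n)%nat -> k <> x -> k <> y ->
    (r k < r x -> th k < t) /\ (r k < r y -> th k < t + PI).

Definition crossing (n : nat) (r th : nat -> R) (x y : nat) : Prop :=
  r x < r y /\ exists t, through_center_view n r th x y t.

Lemma clear_between_sym n r th i j : clear_between n r th i j -> clear_between n r th j i.
Proof. intros H k Hk Hb. destruct (H k Hk); [tauto|]. split; auto. Qed.

Lemma semi_arc_rep_radius_inj n r th i j : semi_arc_rep n r th ->
  (i < n)%nat -> (j < n)%nat -> i <> j -> r i <> r j.
Proof.
  intros [Hpos Hdis] Hi Hj Hij E.
  destruct (Hpos i Hi) as [? ?], (Hpos j Hj) as [? ?].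
  apply (Hdis i j Hi Hj Hij (r i * cos 0, r i * sin 0)); rewrite ?E; apply semi_arc_at; lra.
Qed.

Section Visibility.

Variables (n : nat) (r th : nat -> R).
Hypothesis rep : semi_arc_rep n r th.

Lemma opposite_sight_cases x y t : (x < n)%nat -> (y < n)%nat -> x <> y ->
  0 <= t <= th x -> t + PI <= th y ->
  (forall k, (k < n)%nat -> k <> x -> k <> y -> forall w,
     segment (r x * cos t, r x * sin t) (r y * cos (t + PI), r y * sin (t + PI)) w ->
     ~ semi_arc (r k) (th k) w) ->
  clear_between n r th x y \/ crossing n r th x y.
Proof.
  intros Hx Hy Hxy Ht Hty Hblock.
  pose proof PI_RGT_0. pose proof (proj1 rep) as Hpos.
  destruct (Hpos x Hx) as [Hrx _], (Hpos y Hy) as [Hry _].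
  rewrite polar_add_PI in Hblock.
  assert (Near : forall k, (k < n)%nat -> k <> x -> k <> y -> r k < r x -> th k < t).
  { intros k Hk Hkx Hky Hr. destruct (Rlt_or_le (th k) t) as [|Hge]; auto. exfalso.
    destruct (Hpos k Hk) as [? _].
    apply (Hblock k Hk Hkx Hky (r k * cos t, r k * sin t)).
    - apply segment_on_line; lra.
    - apply semi_arc_at; lra. }
  assert (Far : forall k, (k < n)%nat -> k <> x -> k <> y -> r k < r y -> th k < t + PI).
  { intros k Hk Hkx Hky Hr. destruct (Rlt_or_le (th k) (t + PI)) as [|Hge]; auto. exfalso.
    destruct (Hpos k Hk) as [? _].
    apply (Hblock k Hk Hkx Hky (r k * cos (t + PI), r k * sin (t + PI))).
    - rewrite polar_add_PI. apply segment_on_line; lra.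
    - apply semi_arc_at; lra. }
  assert (Hne : r x <> r y) by (apply (semi_arc_rep_radius_inj n r th); auto).
  assert (Other : forall k, r k <> r x -> r k <> r y -> k <> x /\ k <> y)
    by (intros k ? ?; split; intros ->; auto).
  destruct (Rlt_or_le (r y) (r x)) as [Hyx|Hxy'];
    [|destruct (Rlt_or_le (th x) (t + PI)) as [Hthx|Hthx]].
  - left. intros k Hk Hb. destruct (Other k) as [? ?]; [lra|lra|].
    assert (th k < t) by (apply Near; auto; lra). lra.
  - right. split; [lra|]. exists t. repeat split; auto; lra.
  - left. intros k Hk Hb. destruct (Other k) as [? ?]; [lra|lra|].
    assert (th k < t + PI) by (apply Far; auto; lra). lra.
Qed.

Lemma sav_adj_cases i j : (i < n)%nat -> (j < n)%nat -> sav_adj n r th i j ->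
  clear_between n r th i j \/ crossing n r th i j \/ crossing n r th j i.
Proof.
  intros Hi Hj (Hij & p & q & (t1 & Ht1 & ->) & (t2 & Ht2 & ->) & Hrad & Hblock).
  pose proof PI_RGT_0. pose proof (proj1 rep) as Hpos.
  destruct (Hpos i Hi) as [Hri Hthi], (Hpos j Hj) as [Hrj Hthj].
  assert (Hs : sin (t2 - t1) = 0).
  { unfold radial in Hrad; simpl in Hrad. rewrite sin_minus.
    assert (E : r i * r j * (sin t2 * cos t1 - cos t2 * sin t1) = 0)
      by (rewrite <- Hrad; ring).
    apply Rmult_integral in E as [E|]; [apply Rmult_integral in E as [|]; lra|auto]. }
  assert (Hne : r i <> r j) by (apply (semi_arc_rep_radius_inj n r th); auto).
  destruct (sin_eq_0_small (t2 - t1) Hs) as [E|[E|E]]; [lra| | |].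
  - left. replace t2 with t1 in * by lra. intros k Hk Hb.
    assert (Hki : k <> i) by (intros ->; lra).
    assert (Hkj : k <> j) by (intros ->; lra).
    destruct (Hpos k Hk) as [? _].
    destruct (Rlt_or_le (th k) t1) as [|Hge]; [lra|]. exfalso.
    apply (Hblock k Hk Hki Hkj (r k * cos t1, r k * sin t1)).
    + apply segment_on_line; auto; lra.
    + apply semi_arc_at; lra.
  - replace t2 with (t1 + PI) in * by lra.
    destruct (opposite_sight_cases i j t1) as [|]; auto; lra.
  - replace t1 with (t2 + PI) in * by lra.
    destruct (opposite_sight_cases j i t2) as [|]; auto; try lra.
    + intros k Hk Hkj Hki w Hw. apply (Hblock k Hk Hki Hkj w), segment_sym, Hw.
    + left. apply clear_between_sym; auto.
Qed.

Definition reaches_past_inner (v : nat) : Prop :=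
  forall k, (k < n)%nat -> r k < r v -> th k < th v.

Lemma crossing_reaches_past_inner x y : crossing n r th x y ->
  reaches_past_inner x /\ reaches_past_inner y.
Proof.
  intros (Hxy & t & Ht & Hty & Hk). split; intros k Hkn Hr.
  - assert (k <> x) by (intros ->; lra). assert (k <> y) by (intros ->; lra).
    destruct (Hk k Hkn) as [F _]; auto. specialize (F Hr). lra.
  - assert (k <> y) by (intros ->; lra).
    destruct (Nat.eq_dec k x) as [->|Hkx]; [lra|].
    destruct (Hk k Hkn) as [_ F]; auto. specialize (F Hr). lra.
Qed.

Lemma clear_between_reaches_past_inner a b v : clear_between n r th a b ->
  reaches_past_inner v -> (v < n)%nat -> (a < n)%nat -> ~ (r a < r v < r b).
Proof.
  intros Hab Hv Hvn Han Hb. destruct (Hab v Hvn) as [? _]; [tauto|].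
  specialize (Hv a Han ltac:(lra)). lra.
Qed.

Lemma through_center_views_monotone x y x' y' t t' : (x' < n)%nat -> (y' < n)%nat ->
  r x < r y -> r x' < r y' ->
  through_center_view n r th x y t -> through_center_view n r th x' y' t' -> t <= t' ->
  r x <= r x' /\ r y <= r y'.
Proof.
  intros Hx' Hy' Hxy Hxy' (? & ? & Hk) (? & ? & _) Htt. split.
  - destruct (Rle_or_lt (r x) (r x')) as [|Hl]; auto. exfalso.
    assert (x' <> x) by (intros ->; lra). assert (x' <> y) by (intros ->; lra).
    destruct (Hk x' Hx') as [F _]; auto. specialize (F Hl). lra.
  - destruct (Rle_or_lt (r y) (r y')) as [|Hl]; auto. exfalso.
    assert (y' <> y) by (intros ->; lra).
    destruct (Nat.eq_dec y' x) as [->|Hyx]; [lra|].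
    destruct (Hk y' Hy') as [_ F]; auto. specialize (F Hl). lra.
Qed.

Lemma crossings_monotone x y x' y' :
  (x' < n)%nat -> (y' < n)%nat -> (x < n)%nat -> (y < n)%nat ->
  crossing n r th x y -> crossing n r th x' y' ->
  (r x <= r x' /\ r y <= r y') \/ (r x' <= r x /\ r y' <= r y).
Proof.
  intros ? ? ? ? (Hxy & t & V) (Hxy' & t' & V').
  destruct (Rle_or_lt t t'); [left|right];
    eapply through_center_views_monotone; eauto; lra.
Qed.

End Visibility.

Lemma exists_strict_upper_bound n (f : nat -> R) : exists B, forall k, (k < n)%nat -> f k < B.
Proof.
  induction n as [|n [B HB]]; [exists 0; intros; lia|].
  exists (Rmax B (f n + 1)). intros k Hk.
  destruct (Nat.eq_dec k n) as [->|].
  - eapply Rlt_le_trans; [|apply Rmax_r]. lra.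
  - eapply Rlt_le_trans; [apply HB; lia|apply Rmax_l].
Qed.

Lemma exists_dist_lower_bound m (f : nat -> R) v : (forall k, (k < m)%nat -> f k <> v) ->
  exists h, 0 < h /\ forall k, (k < m)%nat -> h <= Rabs (f k - v).
Proof.
  induction m as [|m IH]; intros H; [exists 1; split; [lra|intros; lia]|].
  destruct IH as [h [Hh Hk]]; [intros; apply H; lia|].
  assert (Hm : f m <> v) by (apply H; lia).
  exists (Rmin h (Rabs (f m - v))). split.
  - apply Rmin_pos; auto. apply Rabs_pos_lt. lra.
  - intros k Hk'. destruct (Nat.eq_dec k m) as [->|]; [apply Rmin_r|].
    eapply Rle_trans; [apply Rmin_l|]. apply Hk; lia.
Qed.

Lemma exists_separation n (f : nat -> R) :
  (forall i j, (i < n)%nat -> (j < n)%nat -> i <> j -> f i <> f j) ->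
  exists g, 0 < g /\ g <= 1 /\
    forall i j, (i < n)%nat -> (j < n)%nat -> i <> j -> g <= Rabs (f i - f j).
Proof.
  induction n as [|n IH]; intros H; [exists 1; repeat split; try lra; intros; lia|].
  destruct IH as (g & Hg & Hg1 & Hgap); [intros; apply H; lia|].
  destruct (exists_dist_lower_bound n f (f n)) as [h [Hh Hnear]]; [intros; apply H; lia|].
  exists (Rmin g h). repeat split.
  - apply Rmin_pos; auto.
  - eapply Rle_trans; [apply Rmin_l|auto].
  - intros i j Hi Hj Hij.
    destruct (Nat.eq_dec i n) as [->|]; destruct (Nat.eq_dec j n) as [->|]; [lia| | |].
    + rewrite Rabs_minus_sym. eapply Rle_trans; [apply Rmin_r|]. apply Hnear; lia.
    + eapply Rle_trans; [apply Rmin_r|]. apply Hnear; lia.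
    + eapply Rle_trans; [apply Rmin_l|]. apply Hgap; lia.
Qed.

(** * The drawing *)

Section Drawing.

Variables (n : nat) (r th : nat -> R) (B g : R).
Hypothesis rep : semi_arc_rep n r th.
Hypothesis B_ge1 : 1 <= B.
Hypothesis r_lt_B : forall k, (k < n)%nat -> r k < B.
Hypothesis g_pos : 0 < g.
Hypothesis g_le1 : g <= 1.
Hypothesis r_sep : forall i j, (i < n)%nat -> (j < n)%nat -> i <> j -> g <= Rabs (r i - r j).

Definition angle_top : R := 2 * PI + 1.

(* Both vary strictly with r x + r y, which orders nested crossings; the slant
   stays below half the minimal radius gap [g]. *)
Definition depth (x y : nat) : R := 1 + 2 * B - (r x + r y).

Definition slant (x y : nat) : R := g * (r x + r y) / (4 * B).

Definition vertex_detour (x y : nat) : R -> R * R :=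
  detour (r x) (th x) (r y) (th y) (slant x y) (depth x y) B angle_top.

Definition vertex_detour_locus (x y : nat) : R * R -> Prop :=
  detour_locus (r x) (th x) (r y) (th y) (slant x y) (depth x y) B angle_top.

Definition edge_curve (i j : nat) (t : R) : R * R :=
  if excluded_middle_informative (clear_between n r th i j)
  then lerp (r i, th i) (r j, th j) t
  else if Rlt_dec (r i) (r j) then vertex_detour i j t else vertex_detour j i (1 - t).

Lemma radius_inj p q : (p < n)%nat -> (q < n)%nat -> r p = r q -> p = q.
Proof.
  intros Hp Hq E. destruct (Nat.eq_dec p q); auto.
  exfalso; apply (semi_arc_rep_radius_inj n r th p q); auto.
Qed.

Lemma vertices_apart p q : (p < n)%nat -> (q < n)%nat -> apart g (r p) (th p) (r q) (th q).
Proof.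
  intros Hp Hq. destruct (Nat.eq_dec p q) as [->|Hpq]; [left; auto|right].
  specialize (r_sep p q Hp Hq Hpq). unfold Rabs in r_sep.
  destruct (Rcase_abs (r p - r q)); lra.
Qed.

Lemma vertex_bounds k : (k < n)%nat -> 0 < r k < B /\ 0 < th k < angle_top.
Proof.
  intros Hk. destruct (proj1 rep k Hk) as [? [? ?]].
  specialize (r_lt_B k Hk). unfold angle_top. lra.
Qed.

Lemma slant_depth_bounds x y : (x < n)%nat -> (y < n)%nat ->
  0 < slant x y < g / 2 /\ 1 <= depth x y.
Proof.
  intros Hx Hy.
  destruct (vertex_bounds x Hx) as [[? ?] _], (vertex_bounds y Hy) as [[? ?] _].
  unfold slant, depth. split; [split|lra].
  - apply Rdiv_lt_0_compat; nra.
  - apply (Rmult_lt_reg_r (4 * B)); [lra|]. field_simplify; nra.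
Qed.

Lemma crossing_detour_params x y : (x < n)%nat -> (y < n)%nat -> crossing n r th x y ->
  detour_params (r x) (th x) (r y) (th y) (slant x y) (depth x y) B angle_top.
Proof.
  intros Hx Hy C. pose proof C as (Hxy & t & _ & Hthxy & _).
  destruct (slant_depth_bounds x y Hx Hy) as [[? ?] ?].
  destruct (vertex_bounds x Hx) as [[? ?] [? ?]], (vertex_bounds y Hy) as [[? ?] [? ?]].
  destruct (vertices_apart x y Hx Hy) as [[? ?]|[?|?]]; unfold detour_params; lra.
Qed.

Lemma clear_segments_disjoint a b c d z :
  (a < n)%nat -> (b < n)%nat -> (c < n)%nat -> (d < n)%nat ->
  r a < r b -> r c < r d -> clear_between n r th a b -> clear_between n r th c d ->
  ~ (a = c /\ b = d) ->
  open_seg (r a) (th a) (r b) (th b) z -> ~ open_seg (r c) (th c) (r d) (th d) z.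
Proof.
  intros Ha Hb Hc Hd Hab Hcd Cab Ccd Hn.
  apply open_segs_disjoint; auto.
  - intro E. rewrite (radius_inj a c); auto.
  - intro E. rewrite (radius_inj b d); auto.
  - intros [E1 E2]. apply Hn. split; apply radius_inj; auto.
Qed.

Lemma clear_segment_detour_disjoint a b x y z :
  (a < n)%nat -> (b < n)%nat -> (x < n)%nat -> (y < n)%nat ->
  r a < r b -> clear_between n r th a b -> crossing n r th x y ->
  open_seg (r a) (th a) (r b) (th b) z -> ~ vertex_detour_locus x y z.
Proof.
  intros Ha Hb Hx Hy Hab Cab Cxy S Z.
  destruct (slant_depth_bounds x y Hx Hy) as [[? ?] ?].
  destruct (vertex_bounds a Ha) as [_ ?], (vertex_bounds b Hb) as [[? ?] ?].
  destruct (crossing_reaches_past_inner n r th x y Cxy) as [Rx Ry].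
  apply (open_seg_detour_disjoint (r a) (th a) (r b) (th b) (r x) (th x) (r y) (th y)
           (slant x y) (depth x y) B angle_top g z);
    auto using vertices_apart, crossing_detour_params; try lra;
    apply (clear_between_reaches_past_inner n r th a b); auto.
Qed.

Lemma detours_disjoint_ordered x y x' y' z :
  (x < n)%nat -> (y < n)%nat -> (x' < n)%nat -> (y' < n)%nat ->
  crossing n r th x y -> crossing n r th x' y' -> ~ (x = x' /\ y = y') ->
  r x <= r x' -> r y <= r y' ->
  vertex_detour_locus x y z -> ~ vertex_detour_locus x' y' z.
Proof.
  intros Hx Hy Hx' Hy' C C' Hn Lx Ly Z Z'.
  destruct (slant_depth_bounds x' y' Hx' Hy') as [[? ?] ?].
  assert (K : r x + r y < r x' + r y').
  { destruct (Req_dec (r x) (r x')), (Req_dec (r y) (r y')); try lra.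
    exfalso. apply Hn. split; apply radius_inj; auto. }
  assert (slant x y < slant x' y').
  { unfold slant, Rdiv. apply Rmult_lt_compat_r; [apply Rinv_0_lt_compat; lra|nra]. }
  assert (depth x' y' < depth x y) by (unfold depth; lra).
  apply (detours_disjoint (r x) (th x) (r y) (th y) (slant x y) (depth x y)
           (r x') (th x') (r y') (th y') (slant x' y') (depth x' y') B angle_top g z);
    auto using vertices_apart, crossing_detour_params; lra.
Qed.

Lemma detours_disjoint_vertices x y x' y' z :
  (x < n)%nat -> (y < n)%nat -> (x' < n)%nat -> (y' < n)%nat ->
  crossing n r th x y -> crossing n r th x' y' -> ~ (x = x' /\ y = y') ->
  vertex_detour_locus x y z -> ~ vertex_detour_locus x' y' z.
Proof.
  intros Hx Hy Hx' Hy' C C' Hn Z Z'.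
  destruct (crossings_monotone n r th x y x' y') as [[? ?]|[? ?]]; auto.
  - eapply (detours_disjoint_ordered x y x' y'); eauto.
  - eapply (detours_disjoint_ordered x' y' x y); eauto. intros [? ?]; auto.
Qed.

Definition same_pair (a b i j : nat) : Prop := (a = i /\ b = j) \/ (a = j /\ b = i).

Definition edge_locus (i j : nat) (z : R * R) : Prop :=
  (exists a b, same_pair a b i j /\ (a < n)%nat /\ (b < n)%nat /\ r a < r b /\
     clear_between n r th a b /\ open_seg (r a) (th a) (r b) (th b) z) \/
  (exists x y, same_pair x y i j /\ (x < n)%nat /\ (y < n)%nat /\
     crossing n r th x y /\ vertex_detour_locus x y z).

Lemma edge_curve_interior i j t : (i < n)%nat -> (j < n)%nat -> sav_adj n r th i j ->
  0 < t < 1 -> edge_locus i j (edge_curve i j t).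
Proof.
  intros Hi Hj A Ht.
  assert (Hne : r i <> r j) by (apply (semi_arc_rep_radius_inj n r th); auto; apply A).
  unfold edge_curve, same_pair.
  destruct (excluded_middle_informative (clear_between n r th i j)) as [H|H]; [left|right].
  - destruct (Rlt_or_le (r i) (r j)).
    + exists i, j. split; [left; auto|]. do 4 (split; [auto|]). exists t. split; auto.
    + exists j, i. split; [right; auto|]. do 2 (split; [auto|]). split; [lra|].
      split; [apply clear_between_sym; auto|].
      exists (1 - t). split; [lra|]. unfold lerp; simpl; f_equal; ring.
  - destruct (sav_adj_cases n r th rep i j Hi Hj A) as [|[C|C]]; [tauto| |];
      destruct (Rlt_dec (r i) (r j)); try (destruct C; lra).
    + exists i, j. split; [left; auto|]. do 3 (split; [auto|]).
      apply detour_interior; auto using crossing_detour_params.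
    + exists j, i. split; [right; auto|]. do 3 (split; [auto|]).
      apply detour_interior; auto using crossing_detour_params; lra.
Qed.

Lemma edge_curve_path i j : (i < n)%nat -> (j < n)%nat -> sav_adj n r th i j ->
  continuity (fun t => fst (edge_curve i j t)) /\
  continuity (fun t => snd (edge_curve i j t)) /\
  edge_curve i j 0 = (r i, th i) /\ edge_curve i j 1 = (r j, th j) /\
  (forall s t, 0 <= s <= 1 -> 0 <= t <= 1 -> edge_curve i j s = edge_curve i j t -> s = t).
Proof.
  intros Hi Hj A.
  assert (Hne : r i <> r j) by (apply (semi_arc_rep_radius_inj n r th); auto; apply A).
  unfold edge_curve.
  destruct (excluded_middle_informative (clear_between n r th i j)) as [H|H].
  - unfold lerp; simpl. repeat split; try apply continuity_affine; try (f_equal; ring).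
    intros s t _ _ E. injection E; intros _ E1.
    apply (Rmult_eq_reg_r (r j - r i)); lra.
  - destruct (sav_adj_cases n r th rep i j Hi Hj A) as [|[C|C]]; [tauto| |];
      destruct (Rlt_dec (r i) (r j)); try (destruct C; lra).
    + pose proof (crossing_detour_params i j Hi Hj C) as P.
      destruct (continuity_detour (r i) (th i) (r j) (th j) (slant i j) (depth i j) B angle_top).
      unfold vertex_detour. rewrite detour_0, detour_1.
      repeat split; auto.
      intros s t Hs Ht. apply (detour_injective _ _ _ _ _ _ _ _ s t P Hs Ht).
    + pose proof (crossing_detour_params j i Hj Hi C) as P.
      destruct (continuity_detour (r j) (th j) (r i) (th i) (slant j i) (depth j i) B angle_top)
        as [C1 C2].
      assert (Hrev : forall f, continuity f -> continuity (fun t => f (1 - t))).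
      { intros f Hf. apply (continuity_comp (fun t => 1 - t) f); auto.
        apply continuity_minus; [apply continuity_cst|apply derivable_continuous, derivable_id]. }
      rewrite Rminus_0_r, Rminus_diag. unfold vertex_detour. rewrite detour_0, detour_1.
      repeat split; [apply (Hrev _ C1)|apply (Hrev _ C2)|].
      intros s t Hs Ht E. cut (1 - s = 1 - t); [lra|].
      apply (detour_injective _ _ _ _ _ _ _ _ (1 - s) (1 - t) P); auto; lra.
Qed.

Lemma edge_locus_avoids_vertex i j k : (k < n)%nat -> ~ edge_locus i j (r k, th k).
Proof.
  intros Hk [(a & b & _ & Ha & Hb & Hab & Cab & S)|(x & y & _ & Hx & Hy & Cxy & Z)].
  - apply (open_seg_avoids_point (r a) (th a) (r b) (th b) (r k) (th k)); auto.
    + intro E. rewrite (radius_inj k a); auto.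
    + intro E. rewrite (radius_inj k b); auto.
  - destruct (slant_depth_bounds x y Hx Hy) as [[? ?] ?].
    destruct (vertex_bounds k Hk) as [[? ?] ?].
    apply (detour_avoids_point (r x) (th x) (r y) (th y) (slant x y) (depth x y) B angle_top g
             (r k) (th k)); auto using vertices_apart, crossing_detour_params; lra.
Qed.

Lemma edge_loci_disjoint i j k l z : ~ same_pair i j k l ->
  edge_locus i j z -> ~ edge_locus k l z.
Proof.
  intros Hn [(a & b & Pab & Ha & Hb & Hab & Cab & S)|(x & y & Pxy & Hx & Hy & Cxy & Z)]
            [(c & d & Pcd & Hc & Hd & Hcd & Ccd & S')|(x' & y' & Pxy' & Hx' & Hy' & Cxy' & Z')].
  - apply (clear_segments_disjoint a b c d z); auto.
    intros [<- <-]. apply Hn. unfold same_pair in *. lia.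
  - apply (clear_segment_detour_disjoint a b x' y' z); auto.
  - apply (clear_segment_detour_disjoint c d x y z); auto.
  - apply (detours_disjoint_vertices x y x' y' z); auto.
    intros [<- <-]. apply Hn. unfold same_pair in *. lia.
Qed.

End Drawing.

Theorem mainTheorem1 (n : nat) (r th : nat -> R) :
  semi_arc_rep n r th -> planar n (sav_adj n r th).
Proof.
  intros rep.
  destruct (exists_strict_upper_bound n r) as [B0 HB0].
  destruct (exists_separation n r) as (g & Hg & Hg1 & Hsep).
  { intros i j Hi Hj Hij. apply (semi_arc_rep_radius_inj n r th); auto. }
  set (B := Rmax B0 1).
  assert (HB1 : 1 <= B) by apply Rmax_r.
  assert (HB : forall k, (k < n)%nat -> r k < B).
  { intros k Hk. eapply Rlt_le_trans; [apply HB0; auto|apply Rmax_l]. }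
  exists (fun k => (r k, th k)), (edge_curve n r th B g). split.
  { intros i j Hi Hj E. injection E; intros _ E1. apply (radius_inj n r th rep i j); auto. }
  intros i j Hij Hjn A.
  assert (Hin : (i < n)%nat) by lia.
  destruct (edge_curve_path n r th B g) with (i := i) (j := j)
    as (C1 & C2 & E0 & E1 & Inj); auto.
  do 5 (split; auto). split.
  - intros k t Hk Ht E.
    apply (edge_locus_avoids_vertex n r th B g) with (i := i) (j := j) (k := k); auto.
    rewrite <- E. apply edge_curve_interior; auto.
  - intros k l Hkl Hln A' Hne s t Hs Ht E.
    apply (edge_loci_disjoint n r th B g) with (i := i) (j := j) (k := k) (l := l)
      (z := edge_curve n r th B g i j s); auto.
    + intros [[-> ->]|[-> ->]]; [congruence|lia].
    + apply edge_curve_interior; auto.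
    + rewrite E. apply edge_curve_interior; auto; lia.
Qed.
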